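(* Let $p>1$, let $n>p$ be an integer, let $M$ be a constant with $M>p-1$ and $M>\frac{n(p-1)}{n-p}$, and set $Q=\frac{Mp-p+1}{p-1}$. Put \[ a=\frac{M-p+1}{Mn-pn+n-Mp},\qquad u(r)=\left(\frac{a n-1}{1+a^{\frac{p}{p-1}} M\, r^{\frac{p}{p-1}}}\right)^{\frac{p-1}{M-p+1}} \quad (r\ge 0). \] Then $a>0$, $an>1$, and $u$ is a positive ground state solution of \[ \left(\varphi(u'(r))\right)'+\frac{n-1}{r}\varphi(u'(r))+u^M+u^Q=0 \quad (r>0),\qquad u'(0)=0, \] i.e. $u>0$ on $[0,\infty)$, $u$ satisfies the equation for all $r>0$, $u'(0)=0$, and $u(r)\to 0$ as $r\to\infty$. Moreover $u$ satisfies $\varphi(u'(r))=-a r u^M(r)$ for all $r\ge 0$.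
   Context: Here $\varphi(z)=z|z|^{p-2}$, so that $\left(\varphi(u')\right)'+\frac{n-1}{r}\varphi(u')$ is the radial $p$-Laplacian in $\mathbb{R}^n$. *)

From Stdlib Require Import Reals Lra.
From Coquelicot Require Import Coquelicot.
Open Scope R_scope.

(* Real power x^y for x >= 0 with the convention 0^y = 0 (used only for y > 0).
   Stdlib's Rpower 0 y = exp (y * ln 0) = 1, which is wrong at 0, hence this. *)
Definition rpow (x y : R) : R := if Rle_dec x 0 then 0 else Rpower x y.

Definition phi (p z : R) : R := if Req_EM_T z 0 then 0 else z * Rpower (Rabs z) (p - 2).

Definition gs_a (p M : R) (n : nat) : R :=
  (M - p + 1) / (M * INR n - p * INR n + INR n - M * p).

Definition gs_u (p M : R) (n : nat) (r : R) : R :=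
  let a := gs_a p M n in
  Rpower ((a * INR n - 1) /
          (1 + Rpower a (p / (p - 1)) * M * rpow (Rabs r) (p / (p - 1))))
         ((p - 1) / (M - p + 1)).

From Stdlib Require Import Reals Lra.
From Coquelicot Require Import Coquelicot.
Open Scope R_scope.

(* With q = p/(p-1), k = (p-1)/(M-p+1), C = an - 1 and A = a^q M, the profile is
   u(r) = (C/(1 + A r^q))^k, a smooth function of |r|^q with q > 1, so u'(0) = 0.
   For r > 0, since u^(1/k) = C/(1 + A r^q) and C = kqaM, differentiation gives
   u' = -a^(q-1) r^(q-1) u^(1+1/k); as (q-1)(p-1) = 1 and (1+1/k)(p-1) = M this is
   phi(u') = -a r u^M.  Differentiating once more and using Q = M + 1/k, the
   equation reduces to u^(1/k) (1 + A r^q) = C, which is the same identity again. *)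

Lemma Rpower_pos x y : 0 < Rpower x y.
Proof. exact (exp_pos _). Qed.

Lemma Rpower_sub1 x y : 0 < x -> Rpower x (y - 1) = Rpower x y / x.
Proof.
intros Hx. unfold Rminus, Rdiv.
rewrite Rpower_plus, Rpower_Ropp, Rpower_1 by exact Hx. reflexivity.
Qed.

Lemma phi_opp p x : 0 < x -> phi p (- x) = - Rpower x (p - 1).
Proof.
intros Hx. unfold phi. destruct (Req_EM_T (- x) 0) as [E|_]; [lra|].
rewrite Rabs_Ropp, Rabs_right by lra.
replace (p - 1) with ((p - 2) + 1) by ring.
rewrite Rpower_plus, Rpower_1 by exact Hx. ring.
Qed.

Lemma is_derive_Rpower x y :
  0 < x -> is_derive (fun t => Rpower t y) x (y * Rpower x (y - 1)).
Proof. intros Hx. apply is_derive_Reals, derivable_pt_lim_power, Hx. Qed.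

Lemma Derive_Rpower x y : 0 < x -> Derive (fun t => Rpower t y) x = y * Rpower x (y - 1).
Proof. intros Hx. exact (is_derive_unique _ _ _ (is_derive_Rpower x y Hx)). Qed.

Lemma ex_derive_Rpower x y : 0 < x -> ex_derive (fun t => Rpower t y) x.
Proof. intros Hx. eexists. exact (is_derive_Rpower x y Hx). Qed.

Lemma phi_opp_mul_Rpower p c r v s t : 0 < c -> 0 < r -> 0 < v -> s * (p - 1) = 1 ->
  phi p (- (c * Rpower r s * Rpower v t)) = - (Rpower c (p - 1) * r * Rpower v (t * (p - 1))).
Proof.
intros Hc Hr Hv Hs.
rewrite phi_opp by (repeat apply Rmult_lt_0_compat; auto using Rpower_pos).
rewrite <- !Rpower_mult_distr, !Rpower_mult, Hs, Rpower_1
  by (try apply Rmult_lt_0_compat; auto using Rpower_pos).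
reflexivity.
Qed.

(* |h|^q / |h| = |h|^(q-1) is below eps as soon as |h| < eps^(1/(q-1)). *)
Lemma is_derive_rpow_abs_0 q : 1 < q -> is_derive (fun s => rpow (Rabs s) q) 0 0.
Proof.
intros Hq. apply is_derive_Reals. intros eps Heps.
exists (mkposreal _ (Rpower_pos eps (/ (q - 1)))).
intros h Hh Hlt; simpl in Hlt.
assert (Hh0 : 0 < Rabs h) by (apply Rabs_pos_lt, Hh).
unfold rpow. rewrite Rabs_R0, Rplus_0_l.
destruct (Rle_dec 0 0) as [_|F]; [|lra].
destruct (Rle_dec (Rabs h) 0) as [F|_]; [lra|].
replace ((Rpower (Rabs h) q - 0) / h - 0) with (Rpower (Rabs h) q / h) by (field; exact Hh).
rewrite Rabs_div by exact Hh. rewrite Rabs_right by (left; apply Rpower_pos).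
rewrite <- Rpower_sub1 by exact Hh0.
replace eps with (Rpower (Rpower eps (/ (q - 1))) (q - 1))
  by (rewrite Rpower_mult, Rinv_l, Rpower_1 by lra; reflexivity).
apply Rlt_Rpower_l; lra.
Qed.

Definition bubble (C A q k r : R) : R := Rpower (C / (1 + A * rpow (Rabs r) q)) k.

Section Bubble.

Variables C A q k : R.
Hypotheses (HC : 0 < C) (HA : 0 < A) (Hq : 1 < q) (Hk : 0 < k).

Lemma bubble_denominator_pos r : 0 < 1 + A * Rpower r q.
Proof. pose proof (Rpower_pos r q). nra. Qed.

Lemma bubble_eq r : 0 < r -> bubble C A q k r = Rpower (C / (1 + A * Rpower r q)) k.
Proof.
intros Hr. unfold bubble, rpow. rewrite Rabs_right by lra.
destruct (Rle_dec r 0) as [F|_]; [lra|reflexivity].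
Qed.

Lemma Rpower_bubble_inv r : 0 < r -> Rpower (bubble C A q k r) (/ k) = C / (1 + A * Rpower r q).
Proof.
intros Hr. pose proof (bubble_denominator_pos r).
rewrite bubble_eq, Rpower_mult, Rinv_r, Rpower_1 by (try apply Rdiv_lt_0_compat; lra).
reflexivity.
Qed.

Lemma is_derive_bubble r : 0 < r ->
  is_derive (bubble C A q k) r
    (- (k * q * A / C * Rpower r (q - 1) * Rpower (bubble C A q k r) (1 + / k))).
Proof.
intros Hr. pose proof (bubble_denominator_pos r) as HW.
assert (HCW : 0 < C / (1 + A * Rpower r q)) by (apply Rdiv_lt_0_compat; lra).
apply is_derive_ext_loc with (fun s => Rpower (C / (1 + A * Rpower s q)) k).
{ apply (locally_interval _ r 0 p_infty); simpl; auto.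
  intros s Hs _. symmetry. apply bubble_eq, Hs. }
auto_derive.
{ repeat split; try apply ex_derive_Rpower; lra. }
rewrite Rpower_plus, Rpower_1, Rpower_bubble_inv, bubble_eq by (try apply Rpower_pos; lra).
unfold Rdiv. rewrite !Derive_Rpower, !Rpower_sub1 by lra.
field. lra.
Qed.

Lemma is_derive_bubble_0 : is_derive (bubble C A q k) 0 0.
Proof.
set (g t := Rpower (C / (1 + A * t)) k).
assert (Hg : ex_derive g (rpow (Rabs 0) q)).
{ unfold g, rpow. rewrite Rabs_R0. destruct (Rle_dec 0 0) as [_|F]; [|lra].
  auto_derive. rewrite Rmult_0_r, Rplus_0_r.
  repeat split; try apply ex_derive_Rpower; lra. }
destruct Hg as [dg Hg].
replace 0 with (scal 0 dg) at 2 by (unfold scal; simpl; unfold mult; simpl; ring).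
exact (is_derive_comp g _ 0 dg 0 Hg (is_derive_rpow_abs_0 q Hq)).
Qed.

Lemma is_lim_bubble : is_lim (bubble C A q k) p_infty 0.
Proof.
apply is_lim_spec. intros eps; simpl.
set (eta := Rpower eps (/ k)).
assert (Heta : 0 < eta) by apply Rpower_pos.
exists (Rmax 1 (C / (eta * A))). intros x Hx.
assert (Hx1 : 1 < x) by (eapply Rle_lt_trans; [apply Rmax_l|exact Hx]).
assert (Hx2 : C / (eta * A) < x) by (eapply Rle_lt_trans; [apply Rmax_r|exact Hx]).
assert (Hxq : x <= Rpower x q).
{ rewrite <- (Rpower_1 x) at 1 by lra. apply Rle_Rpower; lra. }
assert (HW : C / (1 + A * Rpower x q) < eta).
{ apply (Rmult_lt_compat_r (eta * A)) in Hx2; [|nra].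
  replace (C / (eta * A) * (eta * A)) with C in Hx2 by (field; lra).
  pose proof (bubble_denominator_pos x).
  apply (Rmult_lt_reg_r (1 + A * Rpower x q)); [lra|].
  unfold Rdiv. rewrite Rmult_assoc, Rinv_l by lra. nra. }
rewrite bubble_eq, Rminus_0_r, Rabs_right by (try (left; apply Rpower_pos); lra).
replace (pos eps) with (Rpower eta k)
  by (unfold eta; rewrite Rpower_mult, Rinv_l, Rpower_1 by (destruct eps; simpl; lra); reflexivity).
apply Rlt_Rpower_l; [exact Hk|split; [|exact HW]].
apply Rdiv_lt_0_compat; [exact HC|apply bubble_denominator_pos].
Qed.

End Bubble.

Section GroundState.

Variables (p M : R) (n : nat).
Hypotheses (Hp : 1 < p) (Hn : p < INR n) (HM : p - 1 < M)
  (HMn : INR n * (p - 1) / (INR n - p) < M).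

Let a := gs_a p M n.
Let q := p / (p - 1).
Let k := (p - 1) / (M - p + 1).
Let C := a * INR n - 1.
Let A := Rpower a q * M.

Lemma gs_denominator_pos : 0 < M * INR n - p * INR n + INR n - M * p.
Proof.
apply (Rmult_lt_compat_r (INR n - p)) in HMn; [|lra].
replace (INR n * (p - 1) / (INR n - p) * (INR n - p)) with (INR n * (p - 1)) in HMn
  by (field; lra).
lra.
Qed.

Lemma gs_a_pos : 0 < a.
Proof. pose proof gs_denominator_pos. unfold a, gs_a. apply Rdiv_lt_0_compat; lra. Qed.

Lemma gs_q_gt1 : 1 < q.
Proof.
unfold q. apply (Rmult_lt_reg_r (p - 1)); [lra|].
unfold Rdiv. rewrite Rmult_assoc, Rinv_l by lra. lra.
Qed.

Lemma gs_k_pos : 0 < k.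
Proof. apply Rdiv_lt_0_compat; lra. Qed.

Lemma gs_A_pos : 0 < A.
Proof. apply Rmult_lt_0_compat; [apply Rpower_pos|lra]. Qed.

Lemma gs_a_n_sub1_eq : C = k * q * a * M.
Proof.
pose proof gs_denominator_pos. unfold C, k, q, a, gs_a.
field. repeat split; lra.
Qed.

Lemma gs_a_n_sub1_pos : 0 < C.
Proof.
rewrite gs_a_n_sub1_eq. assert (0 < q) by (pose proof gs_q_gt1; lra).
apply Rmult_lt_0_compat; [|lra].
apply Rmult_lt_0_compat; [apply Rmult_lt_0_compat|]; auto using gs_k_pos, gs_a_pos.
Qed.

Lemma gs_slope : k * q * A / C = Rpower a (q - 1).
Proof.
pose proof gs_a_pos as Ha. pose proof gs_k_pos. pose proof gs_q_gt1.
rewrite gs_a_n_sub1_eq, Rpower_sub1 by exact Ha. unfold A. field. repeat split; lra.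
Qed.

Lemma gs_u_bubble : gs_u p M n = bubble C A q k.
Proof. reflexivity. Qed.

Lemma gs_is_derive r : 0 < r ->
  is_derive (gs_u p M n) r
    (- (Rpower a (q - 1) * Rpower r (q - 1) * Rpower (gs_u p M n r) (1 + / k))).
Proof.
intros Hr. rewrite gs_u_bubble, <- gs_slope.
apply is_derive_bubble; auto using gs_a_n_sub1_pos, gs_A_pos, gs_q_gt1, gs_k_pos.
Qed.

Lemma gs_is_derive_0 : is_derive (gs_u p M n) 0 0.
Proof.
rewrite gs_u_bubble.
apply is_derive_bubble_0; auto using gs_a_n_sub1_pos, gs_A_pos, gs_q_gt1, gs_k_pos.
Qed.

Lemma gs_flux r : 0 <= r -> phi p (Derive (gs_u p M n) r) = - (a * r * Rpower (gs_u p M n r) M).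
Proof.
intros [Hr|<-].
- pose proof gs_a_pos as Ha. pose proof gs_k_pos as Hk.
  rewrite (is_derive_unique _ _ _ (gs_is_derive r Hr)).
  rewrite phi_opp_mul_Rpower, Rpower_mult by (try apply Rpower_pos; auto; unfold q; field; lra).
  replace ((q - 1) * (p - 1)) with 1 by (unfold q; field; lra).
  replace ((1 + / k) * (p - 1)) with M by (unfold k; field; lra).
  rewrite Rpower_1 by exact Ha. reflexivity.
- rewrite (is_derive_unique _ _ _ gs_is_derive_0).
  unfold phi. destruct (Req_EM_T 0 0) as [_|F]; [ring|lra].
Qed.

Lemma gs_ode r : 0 < r ->
  is_derive (fun s => phi p (Derive (gs_u p M n) s)) r
    (- ((INR n - 1) / r * phi p (Derive (gs_u p M n) r) + Rpower (gs_u p M n r) M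
        + Rpower (gs_u p M n r) ((M * p - p + 1) / (p - 1)))).
Proof.
intros Hr. pose proof gs_a_pos as Ha. pose proof gs_k_pos as Hk.
rewrite gs_flux by lra.
apply is_derive_ext_loc with (fun s => - (a * s * Rpower (gs_u p M n s) M)).
{ apply (locally_interval _ r 0 p_infty); simpl; auto.
  intros s Hs _. symmetry. apply gs_flux; lra. }
pose proof (gs_is_derive r Hr) as Hdu.
assert (Hinv : Rpower (gs_u p M n r) (/ k) = C / (1 + A * Rpower r q)).
{ rewrite gs_u_bubble. apply Rpower_bubble_inv; auto using gs_a_n_sub1_pos, gs_A_pos. }
assert (Hu : 0 < gs_u p M n r) by apply Rpower_pos.
set (u := gs_u p M n) in *. clearbody u.
auto_derive.
{ repeat split; [apply ex_derive_Rpower, Hu|eexists; exact Hdu]. }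
change (Derive (fun x => u x) r) with (Derive u r).
rewrite (is_derive_unique _ _ _ Hdu), Derive_Rpower by exact Hu.
replace ((M * p - p + 1) / (p - 1)) with (M + / k) by (unfold k; field; lra).
rewrite !Rpower_plus, Rpower_1, Hinv, !Rpower_sub1 by lra.
pose proof (bubble_denominator_pos A q gs_A_pos r).
unfold C, A in *. field. repeat split; lra.
Qed.

Lemma gs_is_lim : is_lim (gs_u p M n) p_infty 0.
Proof.
rewrite gs_u_bubble.
apply is_lim_bubble; auto using gs_a_n_sub1_pos, gs_A_pos, gs_q_gt1, gs_k_pos.
Qed.

End GroundState.

Theorem mainTheorem2 (p M : R) (n : nat) :
  1 < p -> p < INR n -> p - 1 < M -> INR n * (p - 1) / (INR n - p) < M ->
  let Q := (M * p - p + 1) / (p - 1) in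
  let a := gs_a p M n in
  let u := gs_u p M n in
  0 < a /\ 1 < a * INR n /\
  (forall r, 0 <= r -> 0 < u r) /\
  (forall r, 0 < r ->
     ex_derive u r /\
     is_derive (fun s => phi p (Derive u s)) r
       (- ((INR n - 1) / r * phi p (Derive u r) + Rpower (u r) M + Rpower (u r) Q))) /\
  is_derive u 0 0 /\
  is_lim u p_infty 0 /\
  (forall r, 0 <= r -> phi p (Derive u r) = - (a * r * Rpower (u r) M)).
Proof.
intros Hp Hn HM HMn Q a u.
split; [apply gs_a_pos; assumption|].
split; [pose proof (gs_a_n_sub1_pos p M n); unfold a; lra|].
split; [intros r _; apply Rpower_pos|].
split; [intros r Hr; split; [eexists; apply gs_is_derive|apply gs_ode]; assumption|].
split; [apply gs_is_derive_0; assumption|].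
split; [apply gs_is_lim; assumption|].
intros r Hr. apply gs_flux; assumption.
Qed.
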